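(* If $\mathbb V\in\mathrm{Rep}(Q,\mathbb{F}_1)$ is indecomposable, then every $\Phi=(\phi_i)_{i\in I}\in\mathrm{End}(\mathbb V)$ is either nilpotent or an isomorphism.
   Context: $\mathrm{Vect}_{\mathbb{F}_1}$: finite pointed sets $(V,0_V)$ with pointed maps injective on the complement of the preimage of the base point. $\mathrm{Rep}(Q,\mathbb{F}_1)$: representations $\mathbb V=(V_i,f_h)$ of a quiver $Q$ (vertices $I$, edges $E$) with $V_i\in\mathrm{Vect}_{\mathbb{F}_1}$ and $f_h:V_{h'}\to V_{h''}$ morphisms, morphisms being families of morphisms commuting with edge maps. Direct sums are taken vertexwise, where $V\oplus W$ is $V\sqcup W$ with base points identified. $\mathbb V$ is indecomposable if it is nonzero and cannot be written as $\mathbb U\oplus\mathbb W$ with $\mathbb U,\mathbb W\ne0$. An endomorphism $T$ of $V\in\mathrm{Vect}_{\mathbb{F}_1}$ is nilpotent if $T^n$ maps everything to $0_V$ for some $n$; $\Phi=(\phi_i)$ is nilpotent if every $\phi_i$ is nilpotent. *)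

From HB Require Import structures.
From mathcomp Require Import all_boot.
Set Implicit Arguments. Unset Strict Implicit. Unset Printing Implicit Defensive.

(* Objects of Vect_F1: finite pointed sets (V, 0_V). *)
Record pset := PSet { pcar :> finType; pt : pcar }.

Definition F1mor (V W : pset) (f : V -> W) : Prop :=
  f (pt V) = pt W /\ (forall x y : V, f x = f y -> f x <> pt W -> x = y).

Record quiver := Quiver { qI : finType; qE : finType;
                          qs : qE -> qI; qt : qE -> qI }.

Record prerep (Q : quiver) := PreRep {
  rV : qI Q -> pset;
  rf : forall h : qE Q, rV (qs h) -> rV (qt h) }.

Definition isrep (Q : quiver) (V : prerep Q) : Prop :=
  forall h : qE Q, F1mor (@rf Q V h).

Definition repmor (Q : quiver) (V W : prerep Q)
    (phi : forall i : qI Q, rV V i -> rV W i) : Prop :=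
  (forall i, F1mor (phi i)) /\
  (forall (h : qE Q) (x : rV V (qs h)),
      phi (qt h) (@rf Q V h x) = @rf Q W h (phi (qs h) x)).

Definition repiso (Q : quiver) (V W : prerep Q)
    (phi : forall i : qI Q, rV V i -> rV W i) : Prop :=
  repmor phi /\
  exists psi : forall i : qI Q, rV W i -> rV V i,
    repmor psi /\ (forall i, cancel (phi i) (psi i) /\ cancel (psi i) (phi i)).

Definition repzero (Q : quiver) (V : prerep Q) : Prop :=
  forall (i : qI Q) (x : rV V i), x = pt (rV V i).

(* Direct sum in Vect_F1: V ⊔ W with base points identified, realised as
   option (V \ {0} + W \ {0}) with base point None. *)
Definition nz (V : pset) := {x : V | x != pt V}.

Definition psum (U W : pset) : pset := @PSet (option (nz U + nz W)) None.

Definition psum_map (U W U' W' : pset) (f : U -> U') (g : W -> W')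
    (z : psum U W) : psum U' W' :=
  match z with
  | None => None
  | Some (inl x) => omap inl (insub (f (val x)) : option (nz U'))
  | Some (inr y) => omap inr (insub (g (val y)) : option (nz W'))
  end.

Definition dsum (Q : quiver) (U W : prerep Q) : prerep Q :=
  @PreRep Q (fun i => psum (rV U i) (rV W i))
    (fun h => psum_map (@rf Q U h) (@rf Q W h)).

Definition indecomposable (Q : quiver) (V : prerep Q) : Prop :=
  ~ repzero V /\
  ~ (exists (U W : prerep Q) (phi : forall i, rV V i -> rV (dsum U W) i),
        [/\ isrep U, isrep W, ~ repzero U, ~ repzero W & repiso phi]).

Definition nilpotent (V : pset) (T : V -> V) : Prop :=
  exists n : nat, forall x : V, iter n T x = pt V.

Definition rep_nilpotent (Q : quiver) (V : prerep Q)
    (phi : forall i : qI Q, rV V i -> rV V i) : Prop :=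
  forall i, nilpotent (phi i).

From mathcomp Require Import all_boot.
Set Implicit Arguments. Unset Strict Implicit. Unset Printing Implicit Defensive.

(* An endomorphism phi of a pointed set that is injective away from the
   preimage of the base point has a Fitting decomposition: every point is
   either eventually sent to the base point or lies on a cycle of phi, and
   only the base point is both.  For an endomorphism of a representation these
   two pointed subsets are stable under the edge maps, since the edge maps
   commute with phi, so they split V as a direct sum of two subrepresentations.
   If V is indecomposable one of them is trivial: either every point lies on a
   cycle, so each phi_i is injective, hence bijective, or every point
   vanishes, so each phi_i is nilpotent. *)

Section PointedEndomorphism.
Variables (V : pset) (T : V -> V).
Hypothesis T_F1 : F1mor T.

Lemma iter_pt n : iter n T (pt V) = pt V.
Proof. by elim: n => //= n ->; case: T_F1. Qed.

Lemma iter_F1mor n : F1mor (iter n T).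
Proof.
elim: n => [|n [_ IHinj]]; first by split.
split; first exact: iter_pt.
move=> x y /= Exy Tx_nz; have [T_pt T_inj] := T_F1.
apply: IHinj; first exact: T_inj Exy Tx_nz.
by apply: contra_not Tx_nz => ->.
Qed.

Lemma fconnect_from_pt x : fconnect T (pt V) x -> x = pt V.
Proof. by move=> /iter_findex <-; exact: iter_pt. Qed.

(* The orbit of x loops back at step [order x]; injectivity of [iter i T]
   away from the base point then makes x itself periodic. *)
Lemma fconnect_pt_or_cycle x : fconnect T x (pt V) || fconnect T (T x) x.
Proof.
have /trajectP[i lt_i_ord Ei] := looping_order T x.
have [Ei_pt|Ei_nz] := eqVneq (iter i T x) (pt V).
  by rewrite -Ei_pt fconnect_iter.
apply/orP; right; apply/(orbitPcycle 2 3).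
exists (order T x - i).-1; rewrite prednK ?subn_gt0 //.
have [_ iter_inj] := iter_F1mor i.
apply: iter_inj; rewrite -iterD subnKC ?(ltnW lt_i_ord) // Ei //.
exact/eqP.
Qed.

Lemma fconnect_pt_cycle x :
  fconnect T x (pt V) -> fconnect T (T x) x -> x = pt V.
Proof.
move=> x_pt /(orbitPcycle 2 0) x_cycle; apply: fconnect_from_pt.
by rewrite (fconnect_cycle x_cycle) -?fconnect_orbit.
Qed.

Lemma nilpotent_fconnect_pt : (forall x, fconnect T x (pt V)) -> nilpotent T.
Proof.
move=> all_pt; exists #|V| => x.
have le_idx : findex T x (pt V) <= #|V|.
  exact: ltnW (leq_trans (findex_max (all_pt x)) (max_card _)).
by rewrite -(subnK le_idx) iterD iter_findex ?iter_pt.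
Qed.

Lemma injective_fconnect_cycle : (forall x, fconnect T (T x) x) -> injective T.
Proof.
move=> all_cycle.
have Tx_pt x : T x = pt V -> x = pt V.
  by move=> Tx; apply: fconnect_from_pt; rewrite -Tx.
move=> x y Exy; have [/Tx_pt x_pt|/eqP Tx_nz] := eqVneq (T x) (pt V).
  by rewrite x_pt (Tx_pt y) // -Exy x_pt; case: T_F1.
by case: T_F1 => _; apply.
Qed.

End PointedEndomorphism.

Lemma fconnect_homo (A B : finType) (f : A -> B) (TA : A -> A) (TB : B -> B) :
  (forall x, f (TA x) = TB (f x)) ->
  forall x y, fconnect TA x y -> fconnect TB (f x) (f y).
Proof.
move=> fT x y /iter_findex <-.
have -> : forall n, f (iter n TA x) = iter n TB (f x) by elim=> //= n <-.
exact: fconnect_iter.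
Qed.

Lemma F1mor_inj (V W : pset) (f : V -> W) :
  f (pt V) = pt W -> injective f -> F1mor f.
Proof. by move=> f_pt f_inj; split=> // x y /f_inj. Qed.

Lemma repiso_cancel (Q : quiver) (V W : prerep Q)
    (phi : forall i, rV V i -> rV W i) (psi : forall i, rV W i -> rV V i) :
    (forall i, phi i (pt (rV V i)) = pt (rV W i)) ->
    (forall i, cancel (phi i) (psi i)) -> (forall i, cancel (psi i) (phi i)) ->
    (forall h x, phi (qt h) (@rf Q V h x) = @rf Q W h (phi (qs h) x)) ->
  repiso phi.
Proof.
move=> phi_pt phiK psiK phi_edge.
have psi_pt i : psi i (pt (rV W i)) = pt (rV V i) by rewrite -phi_pt phiK.
split; first by split=> // i; apply: F1mor_inj (can_inj (phiK i)).
exists psi; split=> //; split=> [i|h x].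
  exact: F1mor_inj (can_inj (psiK i)).
by apply: (can_inj (phiK (qt h))); rewrite phi_edge !psiK.
Qed.

Definition subpset (V : pset) (p : pred V) (p_pt : p (pt V)) : pset :=
  @PSet {x : V | p x} (Sub (pt V) p_pt).

(* The nonzero part of a pointed subset, as an option type: the base point
   and the points outside [p] are sent to [None]. *)
Definition insub_nz (V : pset) (p : pred V) (p_pt : p (pt V)) (x : V) :
  option (nz (subpset p_pt)) :=
  obind insub (insub x : option (subpset p_pt)).

Section InsubNz.
Variables (V : pset) (p : pred V) (p_pt : p (pt V)).

Lemma insub_nz_val (a : nz (subpset p_pt)) : insub_nz p_pt (val (val a)) = Some a.
Proof. by rewrite /insub_nz valK /= valK. Qed.

Lemma insub_nz_Some x a : insub_nz p_pt x = Some a -> val (val a) = x.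
Proof.
rewrite /insub_nz; case: insubP => [u _ <-|] //=.
by case: insubP => [v _ <- [<-]|].
Qed.

Lemma insub_nz_None x : p x -> insub_nz p_pt x = None -> x = pt V.
Proof.
move=> px; rewrite /insub_nz (insubT _ px) /=.
by case: (eqVneq x (pt V)) => // x_nz; rewrite insubT.
Qed.

Lemma insub_nzF x : ~~ p x -> insub_nz p_pt x = None.
Proof. by move=> npx; rewrite /insub_nz insubF //; apply: negbTE. Qed.

Lemma insub_nz_pt : insub_nz p_pt (pt V) = None.
Proof. by rewrite /insub_nz (insubT _ p_pt) /= insubF //= eqxx. Qed.

End InsubNz.

Unset Implicit Arguments.
Section Subrepresentation.
Variables (Q : quiver) (V : prerep Q).
Variables (p : forall i, pred (rV V i)) (p_pt : forall i, p i (pt (rV V i))).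
Hypothesis p_edge : forall h x, p (qs h) x -> p (qt h) (@rf Q V h x).

Definition subrep_edge h (u : subpset (p_pt (qs h))) : subpset (p_pt (qt h)) :=
  Sub (@rf Q V h (val u)) (p_edge h _ (valP u)).

Definition subrep : prerep Q := @PreRep Q (fun i => subpset (p_pt i)) subrep_edge.

Lemma subrep_isrep : isrep V -> isrep subrep.
Proof.
move=> V_rep h; have [rf_pt rf_inj] := V_rep h.
split=> [|u v /(congr1 val) Euv u_nz]; first exact: val_inj.
apply/val_inj/rf_inj => //; apply: contra_not u_nz => rf_u_pt.
exact: val_inj.
Qed.

Lemma subrep_nonzero i x : p i x -> x <> pt (rV V i) -> ~ repzero subrep.
Proof. by move=> px x_nz V0; apply: x_nz; have := congr1 val (V0 i (Sub x px)). Qed.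

End Subrepresentation.
Set Implicit Arguments.

Lemma trivial_or_nonzero_witness (Q : quiver) (V : prerep Q)
    (r : forall i, pred (rV V i)) :
  (forall i x, r i x -> x = pt (rV V i)) \/
  exists i x, r i x /\ x <> pt (rV V i).
Proof.
have [r_triv|] := boolP [forall i, [forall x : rV V i, r i x ==> (x == pt _)]].
  by left=> i x rx; apply/eqP/(implyP (forallP (forallP r_triv i) x)).
move=> /forallPn[i /forallPn[x]]; rewrite negb_imply => /andP[rx /eqP x_nz].
by right; exists i, x.
Qed.

Unset Implicit Arguments.
Section InternalDirectSum.
Variables (Q : quiver) (V : prerep Q).
Hypothesis V_rep : isrep V.
Variables (p : forall i, pred (rV V i)) (p_pt : forall i, p i (pt (rV V i))).
Hypothesis p_edge : forall h x, p (qs h) x -> p (qt h) (@rf Q V h x).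
Variables (q : forall i, pred (rV V i)) (q_pt : forall i, q i (pt (rV V i))).
Hypothesis q_edge : forall h x, q (qs h) x -> q (qt h) (@rf Q V h x).
Hypothesis pq_cover : forall i x, p i x || q i x.
Hypothesis pq_disjoint : forall i x, p i x -> q i x -> x = pt (rV V i).

Let U := subrep Q V p p_pt p_edge.
Let W := subrep Q V q q_pt q_edge.

Definition dsum_join i (z : rV (dsum U W) i) : rV V i :=
  match z with
  | None => pt (rV V i)
  | Some (inl a) => val (val a)
  | Some (inr b) => val (val b)
  end.

Definition dsum_split i (x : rV V i) : rV (dsum U W) i :=
  if insub_nz (p_pt i) x is Some a then Some (inl a)
  else omap inr (insub_nz (q_pt i) x).

Lemma dsum_splitK i : cancel (dsum_split i) (dsum_join i).
Proof.
move=> x; rewrite /dsum_split.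
case Ep: insub_nz => [a|]; first exact: insub_nz_Some Ep.
case Eq: insub_nz => [b|]; first exact: insub_nz_Some Eq.
case/orP: (pq_cover i x) => [px|qx].
  by rewrite (insub_nz_None px Ep).
by rewrite (insub_nz_None qx Eq).
Qed.

Lemma dsum_joinK i : cancel (dsum_join i) (dsum_split i).
Proof.
case=> [[a|b]|] /=; rewrite /dsum_split.
- by rewrite insub_nz_val.
- have b_nz : val (val b) != pt (rV V i).
    by apply: contra (valP b) => /eqP b_pt; apply/eqP/val_inj.
  rewrite insub_nzF ?insub_nz_val //; apply: contra b_nz => pb.
  by apply/eqP/pq_disjoint; last exact: valP (val b).
- by rewrite !insub_nz_pt.
Qed.

Lemma dsum_join_edge h z :
  dsum_join (qt h) (@rf Q (dsum U W) h z) = @rf Q V h (dsum_join (qs h) z).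
Proof.
case: z => [[a|b]|] /=; last by case: (V_rep h).
all: by case: insubP => [u _ /= ->|/negbNE/eqP/(congr1 val) /= ->].
Qed.

Lemma dsum_split_iso : repiso dsum_split.
Proof.
apply: (repiso_cancel _ dsum_splitK dsum_joinK).
  by move=> i; rewrite -[pt _]/(dsum_join i None) dsum_joinK.
move=> h x; apply: (can_inj (dsum_joinK (qt h))).
by rewrite dsum_join_edge !dsum_splitK.
Qed.

Lemma indecomposable_summand_trivial :
  indecomposable V ->
  (forall i x, p i x -> x = pt (rV V i)) \/ (forall i x, q i x -> x = pt (rV V i)).
Proof.
move=> [_ V_indec].
have [p_triv|[i [x [px x_nz]]]] := trivial_or_nonzero_witness p; first by left.
have [q_triv|[j [y [qy y_nz]]]] := trivial_or_nonzero_witness q; first by right.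
case: V_indec; exists U, W, dsum_split; split.
- exact: subrep_isrep.
- exact: subrep_isrep.
- exact: subrep_nonzero px x_nz.
- exact: subrep_nonzero qy y_nz.
- exact: dsum_split_iso.
Qed.

End InternalDirectSum.
Set Implicit Arguments.

Theorem mainTheorem5 (Q : quiver) (V : prerep Q) :
  isrep V -> indecomposable V ->
  forall phi : forall i : qI Q, rV V i -> rV V i,
    repmor phi -> rep_nilpotent phi \/ repiso phi.
Proof.
move=> V_rep V_indec phi [phi_F1 phi_edge].
pose vanishing i x := fconnect (phi i) x (pt (rV V i)).
pose periodic i x := fconnect (phi i) (phi i x) x.
have phi_pt i : phi i (pt (rV V i)) = pt (rV V i) by case: (phi_F1 i).
have edge_fconnect h := fconnect_homo (fun x => esym (phi_edge h x)).
have vanishing_pt i : vanishing i (pt (rV V i)) := connect0 _ _.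
have vanishing_edge h x : vanishing (qs h) x -> vanishing (qt h) (@rf Q V h x).
  by move/(edge_fconnect h); case: (V_rep h) => ->.
have periodic_pt i : periodic i (pt (rV V i)) by rewrite /periodic phi_pt.
have periodic_edge h x : periodic (qs h) x -> periodic (qt h) (@rf Q V h x).
  by move/(edge_fconnect h); rewrite -phi_edge.
have [no_vanishing|no_periodic] := indecomposable_summand_trivial Q V V_rep
    vanishing vanishing_pt vanishing_edge periodic periodic_pt periodic_edge
    (fun i => fconnect_pt_or_cycle (phi_F1 i)) (fun i => fconnect_pt_cycle (phi_F1 i))
    V_indec.
- right; have phi_inj i : injective (phi i).
    apply: injective_fconnect_cycle (phi_F1 i) _ => x.
    have /orP[/no_vanishing ->|//] := fconnect_pt_or_cycle (phi_F1 i) x.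
    by rewrite phi_pt.
  exact: (repiso_cancel _ (fun i => finv_f (phi_inj i)) (fun i => f_finv (phi_inj i))).
- left=> i; apply: nilpotent_fconnect_pt (phi_F1 i) _ => x.
  by have /orP[|/no_periodic ->] := fconnect_pt_or_cycle (phi_F1 i) x.
Qed.
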